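(* Let $G$ be a finite EPPO group. Then $\mathcal{S}(G)$ is cyclically separable if and only if either $pq$ divides $|G|$ for some primes $p > q \geq 5$, or at least two of the following three conditions hold: (i) $p$ divides $|G|$ for some prime $p \geq 5$; (ii) $3$ divides $|G|$ and $G$ has a Sylow $3$-subgroup which is not of order $3$ or is not normal in $G$; (iii) $2$ divides $|G|$ and $G$ has a Sylow $2$-subgroup which is not of order $2$ or is not normal in $G$.
   Context: A finite group is an EPPO group if every element has prime power order. All graphs are simple and undirected. For a finite group $G$, the order supergraph $\mathcal{S}(G)$ is the graph with vertex set $G$ in which two distinct vertices $x,y$ are adjacent if and only if the order of $x$ divides the order of $y$ or the order of $y$ divides the order of $x$. For a graph $\Gamma$, a vertex cutset is a set $S$ of vertices such that $\Gamma - S$ is disconnected; a cyclic vertex cutset is a vertex cutset $S$ such that $\Gamma - S$ has at least two connected components each of which contains a cycle. $\Gamma$ is called cyclically separable if it has a cyclic vertex cutset. *)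

From mathcomp Require Import all_boot all_fingroup all_solvable.
Set Implicit Arguments. Unset Strict Implicit. Unset Printing Implicit Defensive.
Local Open Scope group_scope.

Definition eppo (gT : finGroupType) (G : {group gT}) : Prop :=
  forall x, x \in G -> exists p k, prime p /\ #[x] = (p ^ k)%N.

(* Simple graphs: vertex set V : {set T} with a symmetric irreflexive
   adjacency relation e. *)

Definition restr (T : finType) (W : {set T}) (e : rel T) : rel T :=
  [rel x y | [&& x \in W, y \in W & e x y]].

Definition comp_has_cycle (T : finType) (W : {set T}) (e : rel T) (x : T) :
  Prop :=
  exists c : seq T, [/\ (3 <= size c)%N, uniq c, path.cycle (restr W e) c &
                        connect (restr W e) x (head x c)].

(* S is a cyclic vertex cutset of the graph (V, e): deleting S leaves at
   least two connected components each containing a cycle (in particular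
   the remaining graph is disconnected, so S is a vertex cutset). *)
Definition cyclic_vertex_cutset (T : finType) (V : {set T}) (e : rel T)
  (S : {set T}) : Prop :=
  S \subset V /\
  exists x y, [/\ x \in V :\: S, y \in V :\: S,
                  ~~ connect (restr (V :\: S) e) x y,
                  comp_has_cycle (V :\: S) e x &
                  comp_has_cycle (V :\: S) e y].

Definition cyclically_separable (T : finType) (V : {set T}) (e : rel T) :
  Prop := exists S : {set T}, cyclic_vertex_cutset V e S.

Definition order_super_rel (gT : finGroupType) : rel gT :=
  [rel x y | (x != y) && ((#[x] %| #[y])%N || (#[y] %| #[x])%N)].

Definition order_supergraph_cyclically_separable (gT : finGroupType)
  (G : {group gT}) : Prop :=
  cyclically_separable (G : {set gT}) (@order_super_rel gT).

From mathcomp Require Import all_boot all_fingroup all_solvable zify.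
Set Implicit Arguments. Unset Strict Implicit. Unset Printing Implicit Defensive.
Local Open Scope group_scope.

(* In an EPPO group every nontrivial element is a p-element for exactly one
   prime p, and two nontrivial elements are adjacent in S(G) iff they are
   p-elements for the same p. The identity is adjacent to every vertex, so it
   lies in every cutset, and S(G) minus the identity is the disjoint union of
   the cliques [pelts G p]. Hence S(G) is cyclically separable iff two primes
   have at least three nontrivial p-elements each. For p >= 5 this just says
   p divides |G|. For p = 2, 3 it fails exactly when the Sylow p-subgroup is
   normal of order p: otherwise either it has order at least p^2 >= 4, or
   there are at least p + 1 Sylow p-subgroups of order p, each generated by
   its own nontrivial elements. *)

Section PrimeElements.

Variables (gT : finGroupType) (G : {group gT}).

Definition pelts (p : nat) : {set gT} := [set x in G | (x != 1) && p.-elt x].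

Lemma card_pgroup_le_pelts (p : nat) (P : {group gT}) :
  P \subset G -> p.-group P -> (#|P| <= #|pelts p|.+1)%N.
Proof.
move=> sPG pP; rewrite (cardsD1 1) group1 ltnS subset_leq_card //.
apply/subsetP=> x; rewrite !inE => /andP[ntx Px].
by rewrite (subsetP sPG) // ntx (mem_p_elt pP).
Qed.

Lemma card_pelts_normal_Sylow (p : nat) (P : {group gT}) :
  P \in 'Syl_p(G) -> P <| G -> (#|pelts p| < #|P|)%N.
Proof.
rewrite inE => sylP nPG; rewrite (cardsD1 1 P) group1 ltnS subset_leq_card //.
apply/subsetP=> x; rewrite !inE => /and3P[Gx ntx px].
by rewrite ntx (mem_normal_Hall sylP nPG Gx).
Qed.

Lemma card_Syl_le_pelts (p : nat) (P : {group gT}) :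
  prime p -> P \in 'Syl_p(G) -> #|P| = p -> (#|'Syl_p(G)| <= #|pelts p|)%N.
Proof.
move=> pr_p; rewrite inE => sylP oP.
apply: leq_trans (leq_imset_card (fun x => <[x]>%G) _).
apply: subset_leq_card; apply/subsetP=> Q; rewrite inE => sylQ.
have oQ : #|Q| = p by rewrite (card_Hall sylQ) -(card_Hall sylP).
have [x Qx ntx] : exists2 x, x \in Q & x != 1.
  by apply/trivgPn; rewrite -cardG_gt1 oQ prime_gt1.
have ox : #[x] = p.
  by apply/(prime_nt_dvdP pr_p); rewrite ?order_eq1 // -oQ order_dvdG.
have -> : Q = <[x]>%G.
  by apply/val_inj/eqP; rewrite eq_sym eqEcard cycle_subG Qx oQ -ox /=.
rewrite imset_f // inE (subsetP (pHall_sub sylQ)) //= ntx.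
exact: mem_p_elt (pHall_pgroup sylQ) Qx.
Qed.

Lemma dvdn_pelts (p : nat) x : x \in pelts p -> (p %| #|G|)%N.
Proof.
rewrite inE => /and3P[Gx ntx /p_natP[[|k] ox]].
  by rewrite -order_eq1 ox in ntx.
by apply: dvdn_trans (order_dvdG Gx); rewrite ox dvdn_exp.
Qed.

Lemma one_lt_card_Sylow (p : nat) (P : {group gT}) :
  prime p -> P \in 'Syl_p(G) -> (p %| #|G|)%N -> (1 < #|P|)%N.
Proof.
move=> pr_p; rewrite inE => sylP pG.
by rewrite (card_Hall sylP) p_part_gt1 mem_primes pr_p cardG_gt0.
Qed.

Lemma prime_lt_card_Syl (p : nat) (P : {group gT}) :
  prime p -> P \in 'Syl_p(G) -> ~~ (P <| G) -> (p < #|'Syl_p(G)|)%N.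
Proof.
move=> pr_p; rewrite inE => sylP nnPG.
have ntSyl : #|'Syl_p(G)| != 1%N.
  rewrite (card_Syl sylP); apply: contra nnPG => /eqP/index1g NGP.
  by rewrite -[X in _ <| X]NGP ?normalSG ?subsetIl ?(pHall_sub sylP).
have := card_Syl_mod G pr_p; move: ntSyl; set n := #|_|.
case: (ltngtP p n) => // [lt_np | <-]; last by rewrite modnn.
by rewrite modn_small // => /eqP.
Qed.

Lemma two_lt_card_pelts_Sylow (p : nat) (P : {group gT}) :
  prime p -> (p %| #|G|)%N -> P \in 'Syl_p(G) ->
  #|P| != p \/ ~~ (P <| G) -> (2 < #|pelts p|)%N.
Proof.
move=> pr_p pG sylP oP_nnPG; have p_gt1 := prime_gt1 pr_p.
have [oP | neq_oP] := eqVneq #|P| p.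
  case: oP_nnPG => [|nnPG]; first by rewrite oP eqxx.
  apply: leq_trans _ (card_Syl_le_pelts pr_p sylP oP).
  exact: leq_ltn_trans p_gt1 (prime_lt_card_Syl pr_p sylP nnPG).
have sylP' : p.-Sylow(G) P by move: sylP; rewrite inE.
have [k oPk] := p_natP (pHall_pgroup sylP').
have := card_pgroup_le_pelts (pHall_sub sylP') (pHall_pgroup sylP').
have := one_lt_card_Sylow pr_p sylP pG; move: neq_oP.
rewrite oPk; case: k {oPk} => [|[|k]]; rewrite ?expn1 ?eqxx // !expnS => _ _.
have := expn_gt0 p k; rewrite (ltnW p_gt1) /=; nia.
Qed.

Lemma two_lt_card_pelts_big (p : nat) :
  prime p -> (5 <= p)%N -> (2 < #|pelts p|)%N = (p %| #|G|)%N.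
Proof.
move=> pr_p le5p; apply/idP/idP => [/card_gt2P[x [_ [_ [[Px _ _] _]]]] | pG].
  exact: dvdn_pelts Px.
have [P sylP] := Sylow_exists p G.
have [oP | neq_oP] := eqVneq #|P| p; last first.
  by apply: two_lt_card_pelts_Sylow pr_p pG _ (or_introl neq_oP); rewrite inE.
have := card_pgroup_le_pelts (pHall_sub sylP) (pHall_pgroup sylP).
by rewrite oP; lia.
Qed.

Lemma two_lt_card_pelts_small (p : nat) :
  prime p -> (p <= 3)%N ->
  (2 < #|pelts p|)%N <->
  (p %| #|G|)%N /\
  exists P : {group gT}, P \in 'Syl_p(G) /\ (#|P| != p \/ ~~ (P <| G)).
Proof.
move=> pr_p le_p3; split=> [rich | [pG [P [sylP oP_nnPG]]]]; last first.
  exact: two_lt_card_pelts_Sylow pr_p pG sylP oP_nnPG.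
have [x [_ [_ [[Px _ _] _]]]] := card_gt2P rich.
split; first exact: dvdn_pelts Px.
have [P sylP] := Sylow_exists p G.
have {}sylP : P \in 'Syl_p(G) by rewrite inE.
exists P; split=> //; have [oP | ] := eqVneq #|P| p; last by left.
have [nPG | ] := boolP (P <| G); last by right.
have := card_pelts_normal_Sylow sylP nPG; rewrite oP.
by move: rich le_p3; lia.
Qed.

End PrimeElements.

Section Connectivity.

Variables (T : finType) (W : {set T}) (e : rel T).

Lemma connect_restr_universal v :
  v \in W -> {in W, forall z, z != v -> e v z && e z v} ->
  {in W &, forall x y, connect (restr W e) x y}.
Proof.
move=> Wv ev x y Wx Wy.
have edge_v z : z \in W -> connect (restr W e) v z && connect (restr W e) z v.
  move=> Wz; have [-> | nzv] := eqVneq z v; first by rewrite connect0.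
  by case/andP: (ev z Wz nzv) => evz ezv; rewrite !connect1 /restr /= ?Wv ?Wz.
case/andP: (edge_v x Wx) => _ cxv; case/andP: (edge_v y Wy) => cvy _.
exact: connect_trans cxv cvy.
Qed.

Lemma comp_has_cycle_clique (A : {set T}) x :
  A \subset W -> (2 < #|A|)%N -> {in A &, forall a b, a != b -> e a b} ->
  x \in A -> comp_has_cycle W e x.
Proof.
move=> sAW /card_gt2P[a [b [c [[Aa Ab Ac] [nab nbc nca]]]]] eA Ax.
have rA u v : u \in A -> v \in A -> u != v -> restr W e u v.
  by move=> Au Av nuv; rewrite /restr /= !(subsetP sAW) ?eA.
exists [:: a; b; c]; split=> //.
- by rewrite /= !inE negb_or nab eq_sym nca nbc.
- by rewrite /= !rA // eq_sym.
- have [-> | nxa] := eqVneq x a; first exact: connect0.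
  exact/connect1/rA.
Qed.

End Connectivity.

Section OrderSupergraph.

Variable gT : finGroupType.

Local Notation osr := (@order_super_rel gT).

Lemma order_super_relC x y : osr x y = osr y x.
Proof. by rewrite /order_super_rel /= eq_sym orbC. Qed.

Lemma order_super_rel1 x : x != 1 -> osr 1 x.
Proof. by rewrite /order_super_rel /= eq_sym order1 dvd1n => ->. Qed.

Lemma order_super_rel_pelt (p : nat) x y :
  p.-elt x -> p.-elt y -> x != y -> osr x y.
Proof.
move=> /p_natP[i oxi] /p_natP[j oyj] nxy.
rewrite /order_super_rel /= nxy oxi oyj.
by case: (leqP i j) => [/dvdn_exp2l-> | /ltnW/dvdn_exp2l->]; rewrite ?orbT.
Qed.

Variable G : {group gT}.

Lemma order_super_rel_pelts (p : nat) :
  {in pelts G p &, forall x y, x != y -> osr x y}.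
Proof.
move=> x y; rewrite !inE => /and3P[_ _ px] /and3P[_ _ py].
exact: order_super_rel_pelt px py.
Qed.

Hypothesis eppoG : eppo G.

Lemma eppo_pelts x : x \in G -> x != 1 -> exists2 p, prime p & x \in pelts G p.
Proof.
move=> Gx ntx; have [p [k [pr_p ox]]] := eppoG Gx.
by exists p; rewrite // inE Gx ntx /p_elt ox pnatX pnat_id.
Qed.

Lemma pelts_order_super_rel (p : nat) x y :
  prime p -> x \in pelts G p -> y \in G -> y != 1 -> osr x y ->
  y \in pelts G p.
Proof.
move=> pr_p; rewrite !inE => /and3P[_ ntx px] Gy nty /andP[_ dvd_xy].
rewrite Gy nty /=; case/orP: dvd_xy => [dvd_xy | /pnat_dvd]; last exact.
have [[|i] oxi] := p_natP px; first by rewrite -order_eq1 oxi in ntx.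
have [r [m [pr_r oy]]] := eppoG Gy.
have : (p %| r ^ m)%N by rewrite -oy (dvdn_trans _ dvd_xy) // oxi dvdn_exp.
rewrite /p_elt oy Euclid_dvdX // dvdn_prime2 // => /andP[/eqP-> _].
by rewrite pnatX pnat_id.
Qed.

Lemma pelts_disjoint (p q : nat) x :
  p != q -> x \in pelts G p -> x \notin pelts G q.
Proof.
move=> neq_pq; rewrite !inE => /and3P[_ ntx px]; apply/negP=> /and3P[_ _ qx].
have pi_x : pdiv #[x] \in \pi(#[x]).
  by rewrite pi_pdiv ltn_neqAle eq_sym order_eq1 ntx order_gt0.
have := pnatPpi px pi_x; have := pnatPpi qx pi_x.
by rewrite !inE => /eqP-> /eqP eq_qp; rewrite eq_qp eqxx in neq_pq.
Qed.

Lemma closed_restr_pelts (p : nat) (W : {set gT}) :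
  prime p -> W \subset G -> 1 \notin W -> closed (restr W osr) (pelts G p).
Proof.
move=> pr_p sWG W1 x y /and3P[Wx Wy exy].
have ntW z : z \in W -> z != 1 by move=> Wz; apply: contraNneq W1 => <-.
apply/idP/idP => [Px | Py].
  exact: pelts_order_super_rel pr_p Px (subsetP sWG y Wy) (ntW y Wy) exy.
rewrite order_super_relC in exy.
exact: pelts_order_super_rel pr_p Py (subsetP sWG x Wx) (ntW x Wx) exy.
Qed.

Lemma comp_has_cycle_pelts (p : nat) (W : {set gT}) x :
  prime p -> W \subset G -> 1 \notin W -> x \in pelts G p ->
  comp_has_cycle W osr x -> (2 < #|pelts G p|)%N.
Proof.
move=> pr_p sWG W1 Px [[|h t] [c_ge3 uniq_c cyc_c cxh]] //.
have clP := closed_connect (closed_restr_pelts pr_p sWG W1).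
have Ph : h \in pelts G p by rewrite -(clP _ _ cxh).
have sub_cP : {subset h :: t <= pelts G p}.
  move=> z cz; rewrite -(clP h) ?Ph //; apply: (path_connect cyc_c).
  by rewrite -cats1 -cat_cons mem_cat cz.
apply: leq_trans c_ge3 _; rewrite -(card_uniqP uniq_c).
exact/subset_leq_card/subsetP.
Qed.

Lemma order_supergraph_cyclically_separableP :
  order_supergraph_cyclically_separable G <->
  exists p q : nat, [/\ p != q, prime p, prime q,
                        (2 < #|pelts G p|)%N & (2 < #|pelts G q|)%N].
Proof.
split=> [[S [_ [x [y [Wx Wy nc_xy cx cy]]]]] |
         [p [q [neq_pq pr_p pr_q rich_p rich_q]]]].
  set W := G :\: S in Wx Wy nc_xy cx cy.
  have sWG : W \subset G := subsetDl G S.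
  have W1 : 1 \notin W.
    apply: contra nc_xy => W1; apply: (connect_restr_universal W1) => // z Wz ntz.
    by rewrite order_super_rel1 // order_super_relC order_super_rel1.
  have ntW z : z \in W -> z != 1 by move=> Wz; apply: contraNneq W1 => <-.
  have [p pr_p Px] := eppo_pelts (subsetP sWG x Wx) (ntW x Wx).
  have [q pr_q Qy] := eppo_pelts (subsetP sWG y Wy) (ntW y Wy).
  exists p, q; split; rewrite ?(comp_has_cycle_pelts pr_p sWG W1 Px) //.
  - apply: contra nc_xy => /eqP eq_pq; rewrite -eq_pq in Qy.
    have [-> // | nxy] := eqVneq x y.
    by rewrite connect1 // /restr /= Wx Wy (order_super_rel_pelts Px Qy).
  - exact: comp_has_cycle_pelts pr_q sWG W1 Qy cy.
have [x [_ [_ [[Px _ _] _]]]] := card_gt2P rich_p.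
have [y [_ [_ [[Qy _ _] _]]]] := card_gt2P rich_q.
set W := G :\: [set 1].
have sPW r : pelts G r \subset W.
  by apply/subsetP=> z; rewrite !inE => /and3P[-> -> _].
exists [set 1]; split; first by rewrite sub1set group1.
exists x, y; split.
- exact: subsetP (sPW p) x Px.
- exact: subsetP (sPW q) y Qy.
- have W1 : 1 \notin W by rewrite !inE eqxx.
  apply/negP=> /(closed_connect (closed_restr_pelts pr_p (subsetDl _ _) W1)).
  by rewrite Px => /esym /(pelts_disjoint neq_pq); rewrite Qy.
- exact: comp_has_cycle_clique (sPW p) rich_p (@order_super_rel_pelts p) Px.
- exact: comp_has_cycle_clique (sPW q) rich_q (@order_super_rel_pelts q) Qy.
Qed.

End OrderSupergraph.

Section TwoRichPrimes.

Variables (n : nat) (rich : nat -> Prop) (c3 c2 : Prop).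
Hypothesis rich_big : forall p, prime p -> (5 <= p)%N -> rich p <-> (p %| n)%N.
Hypothesis rich3 : rich 3 <-> c3.
Hypothesis rich2 : rich 2 <-> c2.

Lemma rich_primeP p :
  prime p -> rich p -> [\/ (5 <= p)%N /\ (p %| n)%N, p = 3 /\ c3 | p = 2 /\ c2].
Proof.
move=> pr_p rp; case: (leqP 5 p) => [le5p | ltp5].
  by constructor 1; split; last exact/rich_big.
case: p pr_p ltp5 rp => [|[|[|[|[|p]]]]] // _ _.
- by move/rich2; constructor 3.
- by move/rich3; constructor 2.
Qed.

Lemma two_rich_primesP :
  (exists p q, [/\ p != q, prime p, prime q, rich p & rich q]) <->
  (exists p q, [/\ prime p, prime q, (5 <= q)%N, (q < p)%N & (p * q %| n)%N]) \/
  (let c1 := exists p, [/\ prime p, (5 <= p)%N & (p %| n)%N] in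
   (c1 /\ c3) \/ (c1 /\ c2) \/ (c3 /\ c2)).
Proof.
split=> [[p [q [neq_pq pr_p pr_q rp rq]]] |].
  wlog lt_qp : p q neq_pq pr_p pr_q rp rq / (q < p)%N.
    move=> wlog_qp; case: (ltngtP q p) => [lt_qp | lt_pq | eq_qp].
    - exact: (wlog_qp p q).
    - by apply: (wlog_qp q p); rewrite // eq_sym.
    - by rewrite eq_qp eqxx in neq_pq.
  have c1_p : (5 <= p)%N /\ (p %| n)%N ->
               exists p, [/\ prime p, (5 <= p)%N & (p %| n)%N].
    by case=> le5p pn; exists p.
  case: (rich_primeP pr_q rq) => [[le5q qn] | [eq_q3 c3q] | [eq_q2 c2q]].
  - have pn : (p %| n)%N by apply/rich_big; rewrite // (leq_trans le5q (ltnW lt_qp)).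
    left; exists p, q; split=> //; rewrite Gauss_dvd ?pn ?qn //.
    by rewrite prime_coprime // dvdn_prime2 // eq_sym neq_pq.
  - case: (rich_primeP pr_p rp) => [big_p | [eq_p3 _] | [eq_p2 _]]; try lia.
    by right; left; split; first exact: c1_p.
  - case: (rich_primeP pr_p rp) => [big_p | [_ c3p] | [eq_p2 _]]; try lia.
      by right; right; left; split; first exact: c1_p.
    by right; right; right.
case=> [[p [q [pr_p pr_q le5q lt_qp pqn]]] | [[[r [pr_r le5r rn]] c3n] |
        [[[r [pr_r le5r rn]] c2n] | [c3n c2n]]]].
- exists p, q; split; rewrite ?neq_ltn ?lt_qp ?orbT //; apply/rich_big => //.
  + by rewrite (leq_trans le5q (ltnW lt_qp)).
  + exact: dvdn_trans (dvdn_mulr q (dvdnn p)) pqn.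
  + exact: dvdn_trans (dvdn_mull p (dvdnn q)) pqn.
- exists r, 3; split; rewrite // ?(rich_big pr_r le5r) ?rich3 //.
  by apply: contraTneq le5r => ->.
- exists r, 2; split; rewrite // ?(rich_big pr_r le5r) ?rich2 //.
  by apply: contraTneq le5r => ->.
- by exists 3, 2; split; rewrite // ?rich3 ?rich2.
Qed.

End TwoRichPrimes.

Theorem mainTheorem3 (gT : finGroupType) (G : {group gT}) :
  eppo G ->
  (order_supergraph_cyclically_separable G <->
   (exists p q : nat, [/\ prime p, prime q, (5 <= q)%N, (q < p)%N &
                          (p * q %| #|G|)%N]) \/
   (let c1 := exists p : nat, [/\ prime p, (5 <= p)%N & (p %| #|G|)%N] in
    let c2 := (3 %| #|G|)%N /\
              exists P : {group gT}, P \in 'Syl_3(G) /\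
                                     (#|P| != 3%N \/ ~~ (P <| G)) in
    let c3 := (2 %| #|G|)%N /\
              exists P : {group gT}, P \in 'Syl_2(G) /\
                                     (#|P| != 2%N \/ ~~ (P <| G)) in
    (c1 /\ c2) \/ (c1 /\ c3) \/ (c2 /\ c3))).
Proof.
move=> eppoG; rewrite (order_supergraph_cyclically_separableP eppoG).
apply: two_rich_primesP => [p pr_p le5p | |].
- by rewrite two_lt_card_pelts_big.
- exact: two_lt_card_pelts_small.
- exact: two_lt_card_pelts_small.
Qed.
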